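(* Let $\hat\xi_1,\dots,\hat\xi_T\in\mathbb{R}^n$, $\kappa>0$, and let $\mathcal{U}\subseteq\mathcal{P}$ be nonempty, closed and convex, with $\hat\Sigma(p)$ positive definite for every $p\in\mathcal{U}$. For $p\in\mathcal{U}$ let $y^{\mathrm{RP}}(p)$ be the unique minimizer of $y\mapsto f_{\mathrm{RP}}(y,p)$ over $\mathbb{R}^n_{++}$ and set $\phi(p)=f_{\mathrm{RP}}(y^{\mathrm{RP}}(p),p)$. Let $(y^*,p^* )\in\mathbb{R}^n_{++}\times\mathcal{U}$ be a saddle point of $f_{\mathrm{RP}}$ on $\mathbb{R}^n_{++}\times\mathcal{U}$. Fix $\gamma>0$ and $p^0\in\mathcal{U}$, and define for $j\ge0$ $$y^j=y^{\mathrm{RP}}(p^j),\qquad p^{j+1}=\Pi_{\mathcal{U}}\big(p^j+\gamma\,\nabla_p f_{\mathrm{RP}}(y^j,p^j)\big),$$ where $\nabla_p f_{\mathrm{RP}}(y,p)=\tfrac12\hat\pi^2(y)-\hat\Theta(y)p$ and $\Pi_{\mathcal{U}}$ is the Euclidean projection onto $\mathcal{U}$. Suppose $L\ge0$ satisfies $\|\nabla_p f_{\mathrm{RP}}(y^j,p^j)\|_2\le L$ for all $j\ge0$. Then for every $k\ge1$, $$0\le \phi(p^* )-\frac1k\sum_{j=0}^{k-1}\phi(p^j)\le\frac{\|p^0-p^*\|_2^2}{2k\gamma}+\frac{\gamma L^2}{2}.$$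
   Context: $\mathcal{P}=\{p\in\mathbb{R}^T:p\ge0,\mathbf{1}^\top p=1\}$; $\mathbb{R}^n_{++}$ is the open positive orthant. $\hat\mu(p)=\sum_t p_t\hat\xi_t$, $\hat\Sigma(p)=\sum_t p_t(\hat\xi_t-\hat\mu(p))(\hat\xi_t-\hat\mu(p))^\top$. $\hat\pi(y)\in\mathbb{R}^T$ has entries $\hat\xi_t^\top y$, $\hat\pi^2(y)$ its entrywise square, $\hat\Theta(y)=\hat\pi(y)\hat\pi(y)^\top$, and $f_{\mathrm{RP}}(y,p)=\tfrac12\big(p^\top\hat\pi^2(y)-p^\top\hat\Theta(y)p\big)-\kappa\sum_{i=1}^n\ln y_i$. A saddle point $(y^*,p^* )$ means $f_{\mathrm{RP}}(y^*,p)\le f_{\mathrm{RP}}(y^*,p^* )\le f_{\mathrm{RP}}(y,p^* )$ for all $y\in\mathbb{R}^n_{++}$, $p\in\mathcal{U}$. (The paper phrases the bound on the gradient as a Lipschitz constant $L$ of $\nabla_p f_{\mathrm{RP}}$, used as a bound on the gradient norm along the iterates.) *)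

From HB Require Import structures.
From mathcomp Require Import all_boot all_order all_algebra.
From mathcomp Require Import all_classical all_reals all_analysis.
Set Implicit Arguments. Unset Strict Implicit. Unset Printing Implicit Defensive.
Import Order.TTheory GRing.Theory Num.Theory.
Import numFieldNormedType.Exports.
Local Open Scope ring_scope.
Local Open Scope classical_set_scope.

Section RP.
Variables (R : realType) (n T : nat).

Definition simplex (p : 'rV[R]_T) : Prop :=
  (forall t, 0 <= p ord0 t) /\ \sum_(t < T) p ord0 t = 1.

Definition posorth (y : 'rV[R]_n) : Prop := forall i, 0 < y ord0 i.

Definition sqnorm (m : nat) (v : 'rV[R]_m) : R := \sum_(i < m) v ord0 i ^+ 2.

Definition posdef (M : 'M[R]_n) : Prop :=
  forall v : 'rV[R]_n, v != 0 -> 0 < (v *m M *m v^T) ord0 ord0.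

Variable xi : 'I_T -> 'rV[R]_n.

Definition muhat (p : 'rV[R]_T) : 'rV[R]_n := \sum_(t < T) p ord0 t *: xi t.

Definition Sigmahat (p : 'rV[R]_T) : 'M[R]_n :=
  \sum_(t < T) p ord0 t *: ((xi t - muhat p)^T *m (xi t - muhat p)).

Definition pihat (y : 'rV[R]_n) : 'rV[R]_T :=
  \row_(t < T) \sum_(i < n) xi t ord0 i * y ord0 i.

Definition pihat2 (y : 'rV[R]_n) : 'rV[R]_T :=
  \row_(t < T) (pihat y ord0 t) ^+ 2.

Definition Thetahat (y : 'rV[R]_n) : 'M[R]_T := (pihat y)^T *m pihat y.

Definition fRP (kappa : R) (y : 'rV[R]_n) (p : 'rV[R]_T) : R :=
  2^-1 * ((p *m (pihat2 y)^T) ord0 ord0 - (p *m Thetahat y *m p^T) ord0 ord0)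
  - kappa * \sum_(i < n) ln (y ord0 i).

(* grad_p fRP(y,p) = 1/2 pihat^2(y) - Theta(y) p  (as a row vector; Theta symmetric) *)
Definition gradp (y : 'rV[R]_n) (p : 'rV[R]_T) : 'rV[R]_T :=
  2^-1 *: pihat2 y - (Thetahat y *m p^T)^T.

Definition is_proj (U : set 'rV[R]_T) (x z : 'rV[R]_T) : Prop :=
  U z /\ forall q, U q -> sqnorm (z - x) <= sqnorm (q - x).

Definition is_yRP (kappa : R) (p : 'rV[R]_T) (y : 'rV[R]_n) : Prop :=
  posorth y /\ forall y', posorth y' -> fRP kappa y p <= fRP kappa y' p.

Definition saddle (kappa : R) (U : set 'rV[R]_T) (ys : 'rV[R]_n) (ps : 'rV[R]_T) : Prop :=
  posorth ys /\ U ps /\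
  (forall p, U p -> fRP kappa ys p <= fRP kappa ys ps) /\
  (forall y, posorth y -> fRP kappa ys ps <= fRP kappa y ps).

End RP.

From HB Require Import structures.
From mathcomp Require Import all_boot all_order all_algebra.
From mathcomp Require Import all_classical all_reals all_analysis.
From mathcomp Require Import ring lra.
Set Implicit Arguments. Unset Strict Implicit. Unset Printing Implicit Defensive.
Import Order.TTheory GRing.Theory Num.Theory.
Import numFieldNormedType.Exports.
Local Open Scope ring_scope.
Local Open Scope classical_set_scope.

(** The standard analysis of projected supergradient ascent on the
    concave dual function [phi].  For fixed [y], [p |-> fRP y p] is a concave
    quadratic, so [gradp (y^j) (p^j)] is a supergradient at [p^j] of
    [fRP (y^j) .], which lies above [phi] and touches it at [p^j].  Projection
    onto a convex set is non-expansive towards points of the set, hence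
    [|p^(j+1) - p*|^2 <= |p^j - p*|^2 - 2 gamma (phi p* - phi p^j) + gamma^2 L^2];
    summing over [j < k] telescopes to the upper bound.  The lower bound holds
    because the saddle point makes [p*] a maximiser of [phi] over [U]. *)

Section Dot.
Variable R : realType.

Definition dot (m : nat) (u v : 'rV[R]_m) : R := \sum_(i < m) u ord0 i * v ord0 i.

Lemma dotC m (u v : 'rV[R]_m) : dot u v = dot v u.
Proof. by apply: eq_bigr => i _; rewrite mulrC. Qed.

Lemma dotDl m (u v w : 'rV[R]_m) : dot (u + v) w = dot u w + dot v w.
Proof. by rewrite /dot -big_split; apply: eq_bigr => i _; rewrite mxE mulrDl. Qed.

Lemma dotNl m (u w : 'rV[R]_m) : dot (- u) w = - dot u w.
Proof. by rewrite /dot -sumrN; apply: eq_bigr => i _; rewrite mxE mulNr. Qed.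

Lemma dotZl m a (u w : 'rV[R]_m) : dot (a *: u) w = a * dot u w.
Proof. by rewrite /dot mulr_sumr; apply: eq_bigr => i _; rewrite mxE mulrA. Qed.

Lemma dotBl m (u v w : 'rV[R]_m) : dot (u - v) w = dot u w - dot v w.
Proof. by rewrite dotDl dotNl. Qed.

Lemma dotDr m (u v w : 'rV[R]_m) : dot w (u + v) = dot w u + dot w v.
Proof. by rewrite dotC dotDl !(dotC w). Qed.

Lemma dotBr m (u v w : 'rV[R]_m) : dot w (u - v) = dot w u - dot w v.
Proof. by rewrite dotC dotBl !(dotC w). Qed.

Lemma dotZr m a (u w : 'rV[R]_m) : dot w (a *: u) = a * dot w u.
Proof. by rewrite dotC dotZl dotC. Qed.

Lemma sqnormE m (u : 'rV[R]_m) : sqnorm u = dot u u.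
Proof. by apply: eq_bigr => i _; rewrite expr2. Qed.

Lemma sqnorm_ge0 m (u : 'rV[R]_m) : 0 <= sqnorm u.
Proof. by apply: sumr_ge0 => i _; rewrite sqr_ge0. Qed.

Lemma sqnormD m (u v : 'rV[R]_m) :
  sqnorm (u + v) = sqnorm u + 2 * dot u v + sqnorm v.
Proof. by rewrite !sqnormE !dotDl !dotDr (dotC v u); ring. Qed.

Lemma sqnormN m (u : 'rV[R]_m) : sqnorm (- u) = sqnorm u.
Proof. by rewrite !sqnormE dotNl dotC dotNl opprK. Qed.

Lemma sqnormZ m a (u : 'rV[R]_m) : sqnorm (a *: u) = a ^+ 2 * sqnorm u.
Proof. by rewrite !sqnormE dotZl dotZr mulrA -expr2. Qed.

Lemma sqnorm_le_sqr m (u : 'rV[R]_m) L :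
  Num.sqrt (sqnorm u) <= L -> sqnorm u <= L ^+ 2.
Proof.
move=> le_uL; rewrite -(sqr_sqrtr (sqnorm_ge0 u)).
by rewrite lerXn2r ?nnegrE ?sqrtr_ge0 // (le_trans (sqrtr_ge0 _) le_uL).
Qed.

Lemma mulmx_tr_dot m (u v : 'rV[R]_m) : (u *m v^T) ord0 ord0 = dot u v.
Proof. by rewrite mxE; apply: eq_bigr => i _; rewrite mxE. Qed.

End Dot.

Section RiskParityObjective.
Variables (R : realType) (n T : nat) (xi : 'I_T -> 'rV[R]_n).

Lemma fRPE kappa y p : fRP xi kappa y p =
  2^-1 * (dot p (pihat2 xi y) - dot (pihat xi y) p ^+ 2)
  - kappa * \sum_(i < n) ln (y ord0 i).
Proof.
rewrite /fRP mulmx_tr_dot /Thetahat; congr (_ * (_ - _) - _).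
rewrite mulmxA -(mulmxA (p *m _)).
by rewrite mxE big_ord1 !mulmx_tr_dot expr2 dotC.
Qed.

Lemma dot_gradp y p w : dot (gradp xi y p) w =
  2^-1 * dot (pihat2 xi y) w - dot (pihat xi y) p * dot (pihat xi y) w.
Proof.
rewrite /gradp dotBl dotZl; congr (_ - _).
rewrite -mulmx_tr_dot /Thetahat trmx_mul trmxK trmx_mul trmxK mulmxA.
by rewrite -(mulmxA (p *m _)) mxE big_ord1 !mulmx_tr_dot dotC.
Qed.

Lemma fRP_supergradient kappa y p q :
  fRP xi kappa y q <= fRP xi kappa y p + dot (gradp xi y p) (q - p).
Proof.
rewrite !fRPE dot_gradp !dotBr (dotC (pihat2 xi y) q) (dotC (pihat2 xi y) p).
set a := dot (pihat xi y) q; set b := dot (pihat xi y) p.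
have : 0 <= (a - b) ^+ 2 by rewrite sqr_ge0.
nra.
Qed.

End RiskParityObjective.

Section Projection.
Variables (R : realType) (T : nat) (U : set 'rV[R]_T).
Hypothesis convexU : convex_set U.

Lemma ge0_of_ge0_perturbation (d s : R) : 0 <= s ->
  (forall t, 0 < t -> t <= 1 -> 0 <= 2 * d + t * s) -> 0 <= d.
Proof.
move=> s_ge0 pert; rewrite leNgt; apply/negP => d_lt0.
have sd_gt0 : 0 < s - d by lra.
pose t := - d / (s - d).
have t_gt0 : 0 < t by apply: divr_gt0; lra.
have t_le1 : t <= 1 by rewrite ler_pdivrMr // mul1r; lra.
have ts : t * (s - d) = - d by rewrite divfK // gt_eqF.
have := pert t t_gt0 t_le1; nra.
Qed.

Lemma proj_obtuse x z q : is_proj U x z -> U q -> 0 <= dot (z - x) (q - z).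
Proof.
move=> [Uz zmin] Uq; apply: (@ge0_of_ge0_perturbation _ (sqnorm (q - z))).
  exact: sqnorm_ge0.
move=> t t_gt0 t_le1.
have Uzt : U (z + t *: (q - z)).
  have := convexU (Itv01 (ltW t_gt0) t_le1) (mem_set Uq) (mem_set Uz).
  by rewrite inE /conv /= scalerBr scalerBl scale1r addrCA.
have := zmin _ Uzt; rewrite [z + _ - x]addrAC (sqnormD (z - x)) sqnormZ dotZr => zt_far.
by rewrite -(pmulr_rge0 _ t_gt0); nra.
Qed.

Lemma proj_nonexpansive x z q :
  is_proj U x z -> U q -> sqnorm (z - q) <= sqnorm (x - q).
Proof.
move=> projz Uq; have := proj_obtuse projz Uq.
have -> : x - q = - ((z - x) + (q - z)) by rewrite opprD !opprB addrA subrK.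
rewrite -[z - q]opprB !sqnormN sqnormD.
by have := sqnorm_ge0 (z - x); lra.
Qed.

Lemma proj_ascent_step x g gamma z q :
  is_proj U (x + gamma *: g) z -> U q ->
  sqnorm (z - q) <= sqnorm (x - q) + 2 * gamma * dot g (x - q) + gamma ^+ 2 * sqnorm g.
Proof.
move=> projz Uq; apply: (le_trans (proj_nonexpansive projz Uq)).
by rewrite addrAC sqnormD sqnormZ dotZr dotC mulrA.
Qed.

End Projection.

Lemma telescope_bound (R : realType) (a d : nat -> R) c :
  (forall j, a j + d j.+1 <= d j + c) ->
  forall k, \sum_(j < k) a j + d k <= d 0%N + k%:R * c.
Proof.
move=> step; elim=> [|k IH]; first by rewrite big_ord0 add0r mul0r addr0.
by rewrite big_ord_recr /= -natr1 mulrDl mul1r; have := step k; lra.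
Qed.

Section SaddlePoint.
Variables (R : realType) (n T : nat) (xi : 'I_T -> 'rV[R]_n).
Variables (kappa : R) (U : set 'rV[R]_T) (yRP : 'rV[R]_T -> 'rV[R]_n).
Hypothesis yRP_min : forall p, U p -> is_yRP xi kappa p (yRP p).
Local Notation phi p := (fRP xi kappa (yRP p) p).

Lemma phi_le_fRP p y : U p -> posorth y -> phi p <= fRP xi kappa y p.
Proof. by move=> /yRP_min[_ ymin]; apply: ymin. Qed.

Lemma saddle_phi_max ystar pstar p : saddle xi kappa U ystar pstar -> U p ->
  phi p <= phi pstar.
Proof.
move=> [ystar_pos [Upstar [saddle_p saddle_y]]] Up.
have -> : phi pstar = fRP xi kappa ystar pstar.
  apply/le_anti; rewrite phi_le_fRP // saddle_y //.
  by have [] := yRP_min Upstar.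
exact: le_trans (phi_le_fRP Up ystar_pos) (saddle_p _ Up).
Qed.

Lemma dual_ascent_step pstar p q gamma L :
  convex_set U -> U pstar -> U p -> 0 <= gamma ->
  is_proj U (p + gamma *: gradp xi (yRP p) p) q ->
  Num.sqrt (sqnorm (gradp xi (yRP p) p)) <= L ->
  2 * gamma * (phi pstar - phi p) + sqnorm (q - pstar)
    <= sqnorm (p - pstar) + gamma ^+ 2 * L ^+ 2.
Proof.
move=> convexU Upstar Up gamma_ge0 projq /sqnorm_le_sqr grad_le.
have phi_star_le := phi_le_fRP Upstar (proj1 (yRP_min Up)).
have superg := fRP_supergradient xi kappa (yRP p) p pstar.
have := proj_ascent_step convexU projq Upstar.
set g := gradp xi (yRP p) p in superg grad_le *.
rewrite -(opprB p) dotC dotNl dotC in superg.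
have := sqr_ge0 gamma; nra.
Qed.

End SaddlePoint.

Theorem theorem4 (R : realType) (n T : nat) (xi : 'I_T -> 'rV[R]_n)
  (kappa : R) (U : set 'rV[R]_T)
  (yRP : 'rV[R]_T -> 'rV[R]_n)
  (ystar : 'rV[R]_n) (pstar : 'rV[R]_T)
  (gamma : R) (p0 : 'rV[R]_T) (L : R) (ps : nat -> 'rV[R]_T) :
  0 < kappa ->
  U !=set0 -> closed U -> convex_set U -> U `<=` @simplex R T ->
  (forall p, U p -> posdef (Sigmahat xi p)) ->
  (forall p, U p -> is_yRP xi kappa p (yRP p)) ->
  saddle xi kappa U ystar pstar ->
  0 < gamma -> U p0 ->
  ps 0%N = p0 ->
  (forall j : nat, is_proj U (ps j + gamma *: gradp xi (yRP (ps j)) (ps j)) (ps j.+1)) ->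
  0 <= L ->
  (forall j : nat, Num.sqrt (sqnorm (gradp xi (yRP (ps j)) (ps j))) <= L) ->
  let phi := fun p => fRP xi kappa (yRP p) p in
  forall k : nat, (0 < k)%N ->
    0 <= phi pstar - k%:R^-1 * \sum_(j < k) phi (ps j) /\
    phi pstar - k%:R^-1 * \sum_(j < k) phi (ps j)
      <= sqnorm (p0 - pstar) / (2 * k%:R * gamma) + gamma * L ^+ 2 / 2.
Proof.
move=> _ _ _ convexU _ _ yRP_min saddle_star gamma_gt0 Up0 ps0 ps_proj _ grad_le.
move=> phi k k_gt0; have [_ [Upstar _]] := saddle_star.
have Ups j : U (ps j) by case: j => [|j]; [rewrite ps0 | case: (ps_proj j)].
have step j := dual_ascent_step yRP_min convexU Upstar (Ups j) (ltW gamma_gt0)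
  (ps_proj j) (grad_le j).
have := telescope_bound step k; rewrite ps0 => sum_le.
have scale_gt0 : 0 < 2 * gamma * k%:R by rewrite !mulr_gt0 ?ltr0n.
have -> : phi pstar - k%:R^-1 * \sum_(j < k) phi (ps j) =
    (2 * gamma * k%:R)^-1 * \sum_(j < k) 2 * gamma * (phi pstar - phi (ps j)).
  rewrite -mulr_sumr [in RHS]sumrB [in RHS]sumr_const card_ord -mulr_natr.
  by field; rewrite ?gt_eqF ?ltr0n.
split.
  apply: mulr_ge0; first by rewrite invr_ge0 ltW.
  apply: sumr_ge0 => j _; apply: mulr_ge0; first by rewrite mulr_ge0 ?ltW.
  by rewrite subr_ge0; have := saddle_phi_max yRP_min saddle_star (Ups j).
rewrite ler_pdivrMl //.
have -> : 2 * gamma * k%:R * (sqnorm (p0 - pstar) / (2 * k%:R * gamma)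
    + gamma * L ^+ 2 / 2) = sqnorm (p0 - pstar) + k%:R * (gamma ^+ 2 * L ^+ 2).
  by field; rewrite ?gt_eqF ?ltr0n.
by have := sqnorm_ge0 (ps k - pstar); lra.
Qed.
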